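(* Let $k$ be an algebraically closed field and let $A=kQ/I$ be a gentle algebra. Then the (nonzero) maximal paths in $(Q,I)$ form a $k$-basis of $\mathrm{soc}_{A^e}A$, the socle of $A$ as a module over its enveloping algebra $A^e=A\otimes_k A^{op}$ (i.e. as an $A$-$A$-bimodule).
   Context: $Q$ is a finite connected quiver, $I$ an admissible ideal, paths composed left to right. A path is in $(Q,I)$ if it is not in $I$; it is maximal if for every arrow $\alpha$, $\alpha p\in I$ and $p\alpha\in I$. Gentle means: each vertex is the start of at most two arrows and the end of at most two arrows; for each arrow $\alpha$ at most one arrow $\beta$ with $\alpha\beta\notin I$ and at most one $\gamma$ with $\gamma\alpha\notin I$; $I$ is generated by paths of length 2; for each arrow $\alpha$ at most one arrow $\delta$ with $\alpha\delta\in I$ and at most one $\varepsilon$ with $\varepsilon\alpha\in I$. *)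

From HB Require Import structures.
From mathcomp Require Import all_boot all_order all_algebra.
Set Implicit Arguments. Unset Strict Implicit. Unset Printing Implicit Defensive.
Import GRing.Theory.
Local Open Scope ring_scope.

(* Paths are composed LEFT TO RIGHT.  A path is encoded as (v, w) where w is the
   word of arrows; (v, [::]) is the trivial path e_v, and for w = a1 :: ... we
   require s a1 = v and t a_i = s a_(i+1). *)
Section Quiver.
Variables (V E : finType) (s t : E -> V).

Definition qpath := (V * seq E)%type.
Definition src (p : qpath) : V := p.1.
Definition tgt (p : qpath) : V := if p.2 is x :: w then t (last x w) else p.1.
Definition valid_path (p : qpath) : bool :=
  if p.2 is x :: w then (s x == p.1) && path (fun a b => t a == s b) x w else true.
Definition arrow_path (a : E) : qpath := (s a, [:: a]).
Definition path_len (p : qpath) : nat := size p.2.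
Definition composable (p q : qpath) : bool := tgt p == src q.
Definition pcat (p q : qpath) : qpath := (p.1, p.2 ++ q.2).

Definition qconnected : Prop :=
  forall u v : V, connect (fun x y => [exists a : E,
     ((s a == x) && (t a == y)) || ((s a == y) && (t a == x))]) u v.

(* The ideal I is generated by the set R of paths of length 2:
   R a b means the length-2 path a b lies in (the generating set of) I. *)
Variable R : rel E.

(* a path lies in I iff it contains a generator as a consecutive subpath *)
Definition in_ideal (p : qpath) : bool :=
  if p.2 is x :: w then ~~ path (fun a b => ~~ R a b) x w else false.
Definition nonzero_path (p : qpath) : bool := valid_path p && ~~ in_ideal p.

(* maximal path: nonzero, and alpha p and p alpha are in I for all arrows alpha
   (a non-composable product is 0, hence in I) *)
Definition is_maximal_path (p : qpath) : bool :=
  nonzero_path p &&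
  [forall a : E,
     ~~ (composable (arrow_path a) p && nonzero_path (pcat (arrow_path a) p)) &&
     ~~ (composable p (arrow_path a) && nonzero_path (pcat p (arrow_path a)))].

(* gentle conditions (I generated by R, R consisting of length-2 paths) *)
Definition gentle : Prop :=
  [/\ (forall a b, R a b -> t a = s b),
      (forall v : V, #|[set a | s a == v]| <= 2 /\ #|[set a | t a == v]| <= 2)%N,
      (forall al : E, #|[set b | (t al == s b) && ~~ R al b]| <= 1 /\
                      #|[set c | (t c == s al) && ~~ R c al]| <= 1)%N &
      (forall al : E, #|[set d | (t al == s d) && R al d]| <= 1 /\
                      #|[set e | (t e == s al) && R e al]| <= 1)%N].

(* admissibility bound: J^m is contained in I (I is contained in J^2 automatically
   since I is generated by paths of length 2) *)
Definition admissible_bound (m : nat) : Prop :=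
  forall p : qpath, valid_path p -> path_len p = m -> in_ideal p.

Fixpoint words (n : nat) : seq (seq E) :=
  if n is n'.+1 then [seq x :: w | x <- enum E, w <- words n'] else [:: [::]].

(* all nonzero paths of length < m; under admissible_bound m these are ALL the
   nonzero paths of (Q, I), i.e. a basis of kQ/I *)
Definition nzpaths (m : nat) : seq qpath :=
  [seq p <- [seq (v, w) | v <- enum V, w <- flatten [seq words n | n <- iota 0 m]]
   | nonzero_path p].

Section Algebra.
Variables (k : fieldType) (m : nat).

Definition PathBasis := seq_sub (nzpaths m).
(* A = kQ/I, as the k-vector space with basis the nonzero paths *)
Definition gentleAlg := {ffun PathBasis -> k^o}.

Definition pathvec (p : qpath) : gentleAlg :=
  if insub p is Some q then [ffun r => if r == q then 1 else 0] else 0.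

Definition mulA (f g : gentleAlg) : gentleAlg :=
  \sum_(p : PathBasis) \sum_(q : PathBasis)
     (f p * g q) *: (if composable (val p) (val q)
                     then pathvec (pcat (val p) (val q)) else 0).

(* sub-A-A-bimodules (= A^e-submodules) of A *)
Definition is_subbimod (U : {vspace gentleAlg}) : Prop :=
  forall a u, u \in U -> mulA a u \in U /\ mulA u a \in U.
Definition simple_subbimod (U : {vspace gentleAlg}) : Prop :=
  [/\ is_subbimod U, U != 0%VS &
      forall W, is_subbimod W -> (W <= U)%VS -> W = 0%VS \/ W = U].
Definition in_socle (x : gentleAlg) : Prop :=
  exists Us : seq {vspace gentleAlg},
    (forall U, U \in Us -> simple_subbimod U) /\ x \in (\sum_(U <- Us) U)%VS.

Definition maxpath_vecs : seq gentleAlg :=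
  [seq pathvec p | p <- nzpaths m & is_maximal_path p].

End Algebra.
End Quiver.

From Pilot Require Import Defs.
From HB Require Import structures.
From mathcomp Require Import all_boot all_order all_algebra.

Set Implicit Arguments.
Unset Strict Implicit.
Unset Printing Implicit Defensive.

(* The line spanned by a maximal path p is a simple
   sub-bimodule, since any product a p b with a nonzero coefficient on a path
   is a nonzero path containing p, hence equal to p.  Conversely, a simple
   sub-bimodule U lies in a power J^n of the arrow ideal but not in J^(n+1);
   then U :&: J^(n+1) is a proper sub-bimodule, hence zero, so every arrow
   annihilates U on both sides, and an element annihilated by all arrows is
   a combination of maximal paths. *)

Section Paths.
Variables (V E : finType) (s t : E -> V) (R : rel E) (m : nat).

Lemma size_words n w : w \in words E n -> size w = n.
Proof.
elim: n w => [|n IHn] w /=; first by rewrite inE => /eqP->.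
by case/allpairsP => [[x u] [_ /= /IHn <- ->]].
Qed.

Lemma mem_words w : w \in words E (size w).
Proof.
elim: w => [|x w IHw] /=; first by rewrite inE.
by apply/allpairsP; exists (x, w); rewrite mem_enum.
Qed.

Lemma uniq_words n : uniq (words E n).
Proof.
elim: n => [|n IHn] //=.
apply: allpairs_uniq => //; first exact: enum_uniq.
by move=> [x u] [y v] _ _ /= [-> ->].
Qed.

Lemma mem_nzpaths p :
  (p \in nzpaths s t R m) = nonzero_path s t R p && (path_len p < m)%N.
Proof.
rewrite /nzpaths mem_filter; case: (nonzero_path _ _ _ p) => //=.
apply/allpairsP/idP.
  case=> [[v w] [_ /= /flattenP [ws /mapP [n n_in ->]] /size_words size_w ->]].
  by rewrite /path_len /= size_w; move: n_in; rewrite mem_iota.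
move=> lt_p_m; exists (p.1, p.2); split; last by case: p {lt_p_m}.
  by rewrite mem_enum.
apply/flattenP; exists (words E (size p.2)); last exact: mem_words.
by apply/mapP; exists (size p.2); rewrite ?mem_iota.
Qed.

Lemma uniq_words_upto n : uniq (flatten [seq words E j | j <- iota 0 n]).
Proof.
elim: n => [|n IHn] //; rewrite -addn1 iotaD map_cat flatten_cat cat_uniq IHn.
rewrite /= cats0 uniq_words andbT; apply/hasPn => w /size_words size_w.
apply/flattenP => -[ws /mapP [j]]; rewrite mem_iota => /andP [_ lt_j_n] ->.
by move/size_words; rewrite size_w => eq_n_j; rewrite eq_n_j ltnn in lt_j_n.
Qed.

Lemma uniq_nzpaths : uniq (nzpaths s t R m).
Proof.
apply/filter_uniq/allpairs_uniq; [exact: enum_uniq | exact: uniq_words_upto |].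
by move=> [x u] [y v] _ _ /= [-> ->].
Qed.

Lemma valid_path_take n (v : V) w :
  valid_path s t (v, w) -> valid_path s t (v, take n w).
Proof.
case: w n => [|x w] [|n] //; rewrite /valid_path /=.
by rewrite -{1}(cat_take_drop n w) cat_path => /andP [-> /andP []].
Qed.

Lemma in_ideal_take n (v : V) w : in_ideal R (v, take n w) -> in_ideal R (v, w).
Proof.
case: w n => [|x w] [|n] //; rewrite /in_ideal /=; apply: contra.
by rewrite -{1}(cat_take_drop n w) cat_path => /andP [].
Qed.

Lemma nonzero_path_lt (adm : admissible_bound s t R m) p :
  nonzero_path s t R p -> (path_len p < m)%N.
Proof.
case: p => v w /andP [valid_vw not_in_I]; rewrite ltnNge; apply/negP => le_m_w.
have := adm (v, take m w) (valid_path_take m valid_vw).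
rewrite /path_len size_takel // => /(_ erefl) /in_ideal_take.
by rewrite (negbTE not_in_I).
Qed.

Lemma nonzero_nzpaths p : p \in nzpaths s t R m -> nonzero_path s t R p.
Proof. by rewrite mem_nzpaths => /andP []. Qed.

Lemma nonzero_arrow_path a : nonzero_path s t R (arrow_path s a).
Proof. by rewrite /nonzero_path /valid_path /in_ideal /= eqxx. Qed.

Lemma pcat_arrowl_inj a q q' :
  composable t (arrow_path s a) q -> composable t (arrow_path s a) q' ->
  pcat (arrow_path s a) q = pcat (arrow_path s a) q' -> q = q'.
Proof.
case: q q' => [v w] [v' w']; rewrite /composable /tgt /src /=.
by move=> /eqP <- /eqP <- [->].
Qed.

Lemma pcat_arrowr_inj a q q' :
  pcat q (arrow_path s a) = pcat q' (arrow_path s a) -> q = q'.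
Proof.
case: q q' => [v w] [v' w'] [-> /eqP].
by rewrite !cats1 eqseq_rcons => /andP [/eqP ->].
Qed.

Lemma maximal_pcatl p q : is_maximal_path s t R p -> composable t q p ->
  nonzero_path s t R (pcat q p) -> pcat q p = p.
Proof.
case: q => v [|x w].
  by case: p => v1 w1; rewrite /composable /tgt /src /pcat /= => _ /eqP ->.
move=> /andP [_ /forallP /(_ (last x w)) /andP [/negP not_nz _]] cp nz.
exfalso; apply: not_nz; move: cp nz; rewrite /composable /tgt /src /pcat /= => cp.
rewrite /nonzero_path /valid_path /in_ideal /= !negbK !cat_path eqxx cp /=.
by move=> /andP [/andP [_ /andP [_ ->]] /andP [_ ->]].
Qed.

Lemma maximal_pcatr p q : is_maximal_path s t R p -> composable t p q ->
  nonzero_path s t R (pcat p q) -> pcat p q = p.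
Proof.
case: q => v [|x w]; first by case: p => v1 w1; rewrite /pcat /= cats0.
move=> /andP [_ /forallP /(_ x) /andP [_ /negP not_nz]] cp nz.
exfalso; apply: not_nz; move: cp nz; case: p => v1 [|y u];
  rewrite /composable /tgt /src /pcat /nonzero_path /valid_path /in_ideal /=.
  by move=> _ /andP [/andP [/eqP -> _] _]; rewrite eqxx.
rewrite !negbK !cat_path /=.
by move=> _ /andP [/andP [-> /andP [-> /andP [-> _]]] /andP [-> /andP [-> _]]].
Qed.

End Paths.

Import GRing.Theory.
Local Open Scope ring_scope.

Section Algebra.
Variables (k : fieldType) (V E : finType) (s t : E -> V) (R : rel E) (m : nat).
Hypothesis adm : admissible_bound s t R m.
Local Notation A := (gentleAlg s t R k m).
Local Notation PB := (PathBasis s t R m).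
Local Notation pv := (pathvec s t R k m).
Local Notation mul := (@Defs.mulA V E s t R k m).
Local Notation maxspan := <<maxpath_vecs s t R k m>>%VS.

Lemma pathvecE p (r : PB) : pv p r = (val r == p)%:R.
Proof.
rewrite /pathvec; case: insubP => [q _ <-|p_notin] /=.
  by rewrite ffunE -val_eqE; case: (_ == _).
rewrite ffunE; case: eqP => // eq_r_p.
by move: (valP r) p_notin; rewrite /= eq_r_p => ->.
Qed.

Lemma scaleAE (c : k) (v : A) (r : PB) : (c *: v) r = c * v r.
Proof. by rewrite /GRing.scale /= ffunE. Qed.

Lemma mulAE (f g : A) (r : PB) : mul f g r = \sum_(p : PB) \sum_(q : PB)
  f p * g q * (composable t (val p) (val q) && (val r == pcat (val p) (val q)))%:R.
Proof.
rewrite /Defs.mulA sum_ffunE; apply: eq_bigr => p _; rewrite sum_ffunE.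
apply: eq_bigr => q _; rewrite scaleAE; case: composable => /=.
  by rewrite pathvecE.
by rewrite ffunE !mulr0.
Qed.

Lemma pathvec_expansion (x : A) : x = \sum_(r : PB) x r *: pv (val r).
Proof.
apply/ffunP => r; rewrite sum_ffunE (big_only1 r) // => [|r' ne_r'r _].
  by rewrite scaleAE pathvecE eqxx mulr1.
by rewrite scaleAE pathvecE val_eqE eq_sym (negbTE ne_r'r) mulr0.
Qed.

Definition arrow_ideal_pow n : {vspace A} :=
  <<[seq pv p | p <- nzpaths s t R m & (n <= path_len p)%N]>>%VS.

Lemma mem_arrow_ideal_pow n (x : A) :
  x \in arrow_ideal_pow n <-> forall r : PB, (path_len (val r) < n)%N -> x r = 0.
Proof.
split=> [x_in r lt_r_n | x_short0].
  rewrite (@coord_span _ _ _ (in_tuple _) _ x_in) sum_ffunE big1 // => i _.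
  have /mapP [p] := mem_nth 0 (ltn_ord i).
  rewrite mem_filter => /andP [le_n_p _] ->; rewrite scaleAE.
  rewrite pathvecE; case: eqP => [eq_r_p|_]; last by rewrite mulr0.
  by move: lt_r_n; rewrite eq_r_p ltnNge le_n_p.
rewrite (pathvec_expansion x); apply: memv_suml => r _.
have [lt_r_n|le_n_r] := ltnP (path_len (val r)) n.
  by rewrite x_short0 // scale0r mem0v.
by apply/memvZ/memv_span/map_f; rewrite mem_filter le_n_r (valP r).
Qed.

Lemma mulA_arrow_ideal_pow i j (f g : A) :
  f \in arrow_ideal_pow i -> g \in arrow_ideal_pow j ->
  mul f g \in arrow_ideal_pow (i + j).
Proof.
move=> /mem_arrow_ideal_pow f_short0 /mem_arrow_ideal_pow g_short0.
apply/mem_arrow_ideal_pow => r lt_r_ij; rewrite mulAE big1 // => p _.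
rewrite big1 // => q _.
have [lt_p_i|le_i_p] := ltnP (path_len (val p)) i; first by rewrite f_short0 ?mul0r.
have [lt_q_j|le_j_q] := ltnP (path_len (val q)) j.
  by rewrite g_short0 ?mulr0 ?mul0r.
case: eqP => [eq_r_pq|_]; last by rewrite andbF mulr0.
move: lt_r_ij; rewrite eq_r_pq /path_len size_cat ltnNge.
by rewrite (leq_add le_i_p le_j_q).
Qed.

Lemma arrow_ideal_pow0 (x : A) : x \in arrow_ideal_pow 0.
Proof. by apply/mem_arrow_ideal_pow. Qed.

Lemma arrow_ideal_pow_nilpotent (x : A) : x \in arrow_ideal_pow m -> x = 0.
Proof.
move/mem_arrow_ideal_pow=> x_short0; apply/ffunP => r; rewrite ffunE x_short0 //.
by have := valP r; rewrite mem_nzpaths => /andP [].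
Qed.

Lemma arrow_in_arrow_ideal a : pv (arrow_path s a) \in arrow_ideal_pow 1.
Proof.
apply/mem_arrow_ideal_pow => r; rewrite pathvecE.
by case: eqP => [->|].
Qed.

Lemma nzpaths_basis p : p \in nzpaths s t R m -> exists r : PB, val r = p.
Proof. by move=> p_in; exists (SeqSub p_in). Qed.

Lemma nonzero_path_basis p : nonzero_path s t R p -> exists r : PB, val r = p.
Proof.
move=> nz_p; apply: nzpaths_basis.
by rewrite mem_nzpaths nz_p (nonzero_path_lt adm).
Qed.

Lemma nonzero_basis_path (r : PB) : nonzero_path s t R (val r).
Proof. exact/nonzero_nzpaths/valP. Qed.

Lemma mulA_arrowl_coord a (x : A) (q r : PB) :
  composable t (arrow_path s a) (val q) -> val r = pcat (arrow_path s a) (val q) ->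
  mul (pv (arrow_path s a)) x r = x q.
Proof.
move=> a_q r_aq; have [ra ra_a] := nonzero_path_basis (nonzero_arrow_path s t R a).
rewrite mulAE (big_only1 ra) // => [|p ne_p_ra _]; last first.
  rewrite big1 // => q' _.
  by rewrite pathvecE -ra_a val_eqE (negbTE ne_p_ra) !mul0r.
rewrite (big_only1 q) // => [|q' ne_q'_q _].
  by rewrite pathvecE ra_a r_aq a_q !eqxx mul1r mulr1.
rewrite ra_a r_aq.
have [a_q'|] /= := boolP (composable _ _ _); last by rewrite mulr0.
case: eqP => [/(pcat_arrowl_inj a_q a_q') /val_inj eq_qq'|_]; last by rewrite mulr0.
by rewrite eq_qq' eqxx in ne_q'_q.
Qed.

Lemma mulA_arrowr_coord a (x : A) (p r : PB) :
  composable t (val p) (arrow_path s a) -> val r = pcat (val p) (arrow_path s a) ->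
  mul x (pv (arrow_path s a)) r = x p.
Proof.
move=> p_a r_pa; have [ra ra_a] := nonzero_path_basis (nonzero_arrow_path s t R a).
have arrow_coord (q : PB) : pv (arrow_path s a) q = (q == ra)%:R.
  by rewrite pathvecE -ra_a val_eqE.
rewrite mulAE (big_only1 p) // => [|p' ne_p'p _].
  rewrite (big_only1 ra) // => [|q ne_q_ra _]; last first.
    by rewrite arrow_coord (negbTE ne_q_ra) mulr0 mul0r.
  by rewrite arrow_coord eqxx ra_a r_pa p_a eqxx !mulr1.
rewrite (big_only1 ra) // => [|q ne_q_ra _]; last first.
  by rewrite arrow_coord (negbTE ne_q_ra) mulr0 mul0r.
rewrite ra_a r_pa; case: eqP => [/pcat_arrowr_inj /val_inj eq_pp'|_].
  by rewrite eq_pp' eqxx in ne_p'p.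
by rewrite andbF mulr0.
Qed.

Lemma arrow_annihilated_maxspan (x : A) :
  (forall a, mul (pv (arrow_path s a)) x = 0 /\ mul x (pv (arrow_path s a)) = 0) ->
  x \in maxspan.
Proof.
move=> annih; rewrite (pathvec_expansion x); apply: memv_suml => r _.
have [max_r|] := boolP (is_maximal_path s t R (val r)).
  by apply/memvZ/memv_span/map_f; rewrite mem_filter max_r (valP r).
rewrite /is_maximal_path nonzero_basis_path => /forallPn [a].
rewrite negb_and !negbK => /orP [] /andP [cp nz];
  have [r' r'_cat] := nonzero_path_basis nz.
- by rewrite -(mulA_arrowl_coord x cp r'_cat) (annih a).1 ffunE scale0r mem0v.
- by rewrite -(mulA_arrowr_coord x cp r'_cat) (annih a).2 ffunE scale0r mem0v.
Qed.

Lemma simple_subbimod_sub_maxspan U : simple_subbimod U -> (U <= maxspan)%VS.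
Proof.
case=> U_bimod U_nz U_simple.
have U_notin_bound : exists n, ~~ (U <= arrow_ideal_pow n)%VS.
  exists m; apply: contra U_nz => /subvP U_sub; rewrite -subv0.
  by apply/subvP => u /U_sub /arrow_ideal_pow_nilpotent ->; rewrite mem0v.
case: (ex_minnP U_notin_bound) => -[|n] U_notin min_n.
  by case/subvP: U_notin => u _; apply: arrow_ideal_pow0.
have U_sub : (U <= arrow_ideal_pow n)%VS.
  by apply: contraT => /min_n; rewrite ltnn.
set W := (U :&: arrow_ideal_pow n.+1)%VS.
have W_bimod : is_subbimod W.
  move=> a u; rewrite memv_cap => /andP [u_U u_J].
  have [au_U ua_U] := U_bimod a u u_U; rewrite !memv_cap au_U ua_U /=; split.
    by rewrite -[n.+1]add0n mulA_arrow_ideal_pow ?arrow_ideal_pow0 //.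
  by rewrite -[n.+1]addn0 mulA_arrow_ideal_pow ?arrow_ideal_pow0.
have W0 : W = 0%VS.
  case: (U_simple W W_bimod (capvSl _ _)) => // WU.
  by move: (capvSr U (arrow_ideal_pow n.+1)); rewrite -/W WU (negbTE U_notin).
apply/subvP => u u_U; apply: arrow_annihilated_maxspan => a.
have u_J := subvP U_sub u u_U.
have [au_U ua_U] := U_bimod (pv (arrow_path s a)) u u_U.
split; apply/eqP; rewrite -memv0 -W0 memv_cap.
  by rewrite au_U -add1n mulA_arrow_ideal_pow // arrow_in_arrow_ideal.
by rewrite ua_U -addn1 mulA_arrow_ideal_pow // arrow_in_arrow_ideal.
Qed.

Lemma pathvec_neq0 (r : PB) : pv (val r) != 0.
Proof.
apply/eqP => /(congr1 (fun f : A => f r)) /eqP.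
by rewrite pathvecE eqxx ffunE oner_eq0.
Qed.

Lemma mem_pathvec_line (y : A) (r0 : PB) :
  y \in <[pv (val r0)]>%VS <-> forall r, r != r0 -> y r = 0.
Proof.
split=> [/vlineP [c ->] r ne_r_r0 | y_supp].
  by rewrite scaleAE pathvecE val_eqE (negbTE ne_r_r0) mulr0.
suff -> : y = y r0 *: pv (val r0) by apply/memvZ/memv_line.
apply/ffunP => r; rewrite scaleAE pathvecE val_eqE.
have [->|ne_r_r0] := eqVneq r r0; first by rewrite mulr1.
by rewrite mulr0 y_supp.
Qed.

Lemma maximal_line_simple (r0 : PB) : is_maximal_path s t R (val r0) ->
  simple_subbimod <[pv (val r0)]>%VS.
Proof.
move=> max_r0; split; last 2 first.
- by rewrite -dimv_eq0 dim_vline pathvec_neq0.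
- move=> W _ W_sub; have := dimvS W_sub; rewrite dim_vline pathvec_neq0.
  case: (eqVneq (\dim W) 0%N) => [/eqP|dimW_neq0 _].
    by rewrite dimv_eq0 => /eqP ->; left.
  by right; apply/eqP; rewrite eqEdim W_sub dim_vline pathvec_neq0 lt0n.
move=> a u /mem_pathvec_line u_supp; split; apply/mem_pathvec_line => r ne_r_r0;
  rewrite mulAE big1 // => p _; rewrite big1 // => q _.
- have [->|ne_q_r0] := eqVneq q r0; last by rewrite u_supp ?mulr0 ?mul0r.
  have [p_r0|] /= := boolP (composable _ _ _); last by rewrite mulr0.
  case: eqP => [r_pr0|_]; last by rewrite mulr0.
  have nz_pr0 : nonzero_path s t R (pcat (val p) (val r0)).
    by rewrite -r_pr0 nonzero_basis_path.
  by case/eqP: ne_r_r0; apply: val_inj => /=; rewrite r_pr0 (maximal_pcatl max_r0).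
- have [->|ne_p_r0] := eqVneq p r0; last by rewrite u_supp ?mul0r.
  have [r0_q|] /= := boolP (composable _ _ _); last by rewrite mulr0.
  case: eqP => [r_r0q|_]; last by rewrite mulr0.
  have nz_r0q : nonzero_path s t R (pcat (val r0) (val q)).
    by rewrite -r_r0q nonzero_basis_path.
  by case/eqP: ne_r_r0; apply: val_inj => /=; rewrite r_r0q (maximal_pcatr max_r0).
Qed.

Lemma free_pathvecs (P : seq (qpath V E)) :
  uniq P -> {subset P <= nzpaths s t R m} -> free [seq pv p | p <- P].
Proof.
elim: P => [|p P IHP] /=; first by rewrite nil_free.
move=> /andP [p_notin_P P_uniq] P_sub.
rewrite free_cons IHP ?andbT //; last first.
  by move=> q q_P; rewrite P_sub ?inE ?q_P ?orbT.
have [rp rp_p] := nzpaths_basis (P_sub p (mem_head _ _)).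
apply/negP => /(@coord_span _ _ _ (in_tuple _)) /(congr1 (fun f : A => f rp)) /eqP.
rewrite pathvecE rp_p eqxx sum_ffunE big1 ?oner_eq0 // => i _; rewrite scaleAE.
have /mapP [q q_P ->] := mem_nth 0 (ltn_ord i); rewrite pathvecE rp_p.
by case: eqP => [eq_pq|_]; [rewrite eq_pq q_P in p_notin_P | rewrite mulr0].
Qed.

Lemma maxspan_in_socle (x : A) : x \in maxspan -> in_socle x.
Proof.
move=> x_in; exists [seq <[v]>%VS | v <- maxpath_vecs s t R k m].
rewrite big_map -span_def; split=> // _ /mapP [_ /mapP [p + ->] ->].
rewrite mem_filter => /andP [max_p p_in]; have [rp rp_p] := nzpaths_basis p_in.
by rewrite -rp_p in max_p *; apply: maximal_line_simple.
Qed.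

Lemma socle_in_maxspan (x : A) : in_socle x -> x \in maxspan.
Proof.
case=> Us [Us_simple]; apply: subvP; rewrite big_seq.
apply: (big_ind (fun W => W <= _)%VS) => [|W1 W2 W1_sub W2_sub|U /Us_simple].
- exact: sub0v.
- by rewrite subv_add W1_sub W2_sub.
- exact: simple_subbimod_sub_maxspan.
Qed.

End Algebra.

Unset Implicit Arguments.

Theorem lemma2p1 (k : closedFieldType) (V E : finType) (s t : E -> V)
  (R : rel E) (m : nat) :
  qconnected s t -> gentle s t R -> admissible_bound s t R m ->
  free (maxpath_vecs s t R k m) /\
  (forall x : gentleAlg s t R k m,
     x \in <<maxpath_vecs s t R k m>>%VS <-> in_socle x).
Proof.
move=> _ _ adm; split=> [|x].
  apply: free_pathvecs; first exact: filter_uniq (uniq_nzpaths _ _ _ _).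
  by move=> p; rewrite mem_filter => /andP [].
by split; [apply: maxspan_in_socle | apply: socle_in_maxspan].
Qed.
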